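(* Let $n,m\ge1$ be integers (not necessarily distinct). Then for the Ramsey number $\mathcal{R}_{\mathcal{II}}$ with respect to the class $\mathcal{II}$ of inclusion ideal graphs, \[ \mathcal{R}_{\mathcal{II}}(n,m)=\mathcal{R}_{\mathcal{PO}}(n,m)=(n-1)(m-1)+1 . \]
   Context: For a ring $R$ (with $1\ne0$, not necessarily commutative), a left ideal $I$ is non-trivial if $I\ne\{0\}$ and $I\ne R$. The inclusion ideal graph $\mathrm{In}(R)$ is the simple undirected graph whose vertices are the non-trivial left ideals of $R$, distinct $I,J$ adjacent iff $I\subset J$ or $J\subset I$; $\mathcal{II}$ is the class of all inclusion ideal graphs. $\mathcal{PO}$ is the class of partial order graphs $G_A$ of posets $(A,\le)$ (vertex set $A$, distinct $a,b$ adjacent iff $a\le b$ or $b\le a$). For a class $\mathcal{C}$ of graphs, $\mathcal{R}_{\mathcal{C}}(n,m)$ is the minimal $r$ such that every induced subgraph with $r$ vertices of any graph in $\mathcal{C}$ contains either $K_n$ or an independent set of $m$ vertices. *)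

From mathcomp Require Import all_boot all_algebra.
From mathcomp Require Import boolp classical_sets.
Set Implicit Arguments. Unset Strict Implicit. Unset Printing Implicit Defensive.
Import GRing.Theory.
Local Open Scope ring_scope.
Local Open Scope classical_set_scope.

(* ---------- Generic (simple) graphs, given by a vertex predicate and an
   adjacency relation on a carrier type V (only distinct pairs matter). ---- *)

Definition has_clique_or_indep (V : Type) (adj : V -> V -> Prop)
    (n m r : nat) (f : 'I_r -> V) : Prop :=
  (exists g : 'I_n -> 'I_r, injective g /\
     forall i j, i != j -> adj (f (g i)) (f (g j))) \/
  (exists g : 'I_m -> 'I_r, injective g /\
     forall i j, i != j -> ~ adj (f (g i)) (f (g j))).

Definition graph_ramsey_prop (V : Type) (vert : V -> Prop)
    (adj : V -> V -> Prop) (n m r : nat) : Prop :=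
  forall f : 'I_r -> V, injective f -> (forall i, vert (f i)) ->
    has_clique_or_indep adj n m f.

Definition is_least (P : nat -> Prop) (r : nat) : Prop :=
  P r /\ forall r', P r' -> (r <= r')%N.

Definition is_left_ideal (R : nzRingType) (I : set R) : Prop :=
  I 0 /\ (forall x y, I x -> I y -> I (x - y)) /\
  (forall r x, I x -> I (r * x)).

Definition nontrivial_left_ideal (R : nzRingType) (I : set R) : Prop :=
  is_left_ideal I /\ I <> [set (0 : R)] /\ I <> [set: R].

Definition inclusion_adj (R : nzRingType) (I J : set R) : Prop :=
  I `<` J \/ J `<` I.

Definition II_ramsey_prop (n m r : nat) : Prop :=
  forall R : nzRingType,
    graph_ramsey_prop (@nontrivial_left_ideal R) (@inclusion_adj R) n m r.

Definition is_partial_order (A : Type) (le : A -> A -> Prop) : Prop :=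
  (forall a, le a a) /\ (forall a b, le a b -> le b a -> a = b) /\
  (forall a b c, le a b -> le b c -> le a c).

Definition po_adj (A : Type) (le : A -> A -> Prop) (a b : A) : Prop :=
  le a b \/ le b a.

Definition PO_ramsey_prop (n m r : nat) : Prop :=
  forall (A : Type) (le : A -> A -> Prop), is_partial_order le ->
    graph_ramsey_prop (fun _ : A => True) (po_adj le) n m r.

Definition R_II_is (n m r : nat) : Prop := is_least (II_ramsey_prop n m) r.
Definition R_PO_is (n m r : nat) : Prop := is_least (PO_ramsey_prop n m) r.

From mathcomp Require Import all_boot all_algebra.
From mathcomp Require Import boolp classical_sets.
From mathcomp Require Import zify.
Set Implicit Arguments. Unset Strict Implicit. Unset Printing Implicit Defensive.
Import GRing.Theory.
Local Open Scope ring_scope.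

(* Upper bound (Mirsky's dual of Dilworth's theorem): if no antichain has more
   than b elements, the maximal elements of a set form an antichain, so peeling
   them off a set of more than k * b elements k times leaves a chain of k + 1
   elements.  Since In(R) is the comparability graph of inclusion on left
   ideals, the bound for PO gives the bound for II.
   Lower bound: for distinct primes p_0, ..., p_(b-1), the ideals p_c^(l+1) Z
   with l < a form b mutually incomparable chains of a ideals each; their
   inclusion graph is a disjoint union of b copies of K_a, with neither K_(a+1)
   nor b + 1 independent vertices.  This also refutes the PO property, which
   implies the II one. *)

Lemma large_set_injection (T : finType) (P : T -> T -> Prop) k (S : {set T}) :
  (k <= #|S|)%N -> {in S &, forall i j, i != j -> P i j} ->
  exists g : 'I_k -> T, injective g /\ forall i j, i != j -> P (g i) (g j).
Proof.
move=> kS SP; pose g i := enum_val (widen_ord kS i).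
have g_inj : injective g by move=> i j /enum_val_inj /(congr1 val) /= /val_inj.
exists g; split=> // i j ij.
by apply: SP; rewrite ?enum_valP ?(inj_eq g_inj).
Qed.

Lemma eq_has_clique_or_indep (V : Type) (adj adj' : V -> V -> Prop) n m r
    (f : 'I_r -> V) :
  (forall i j, i != j -> adj (f i) (f j) <-> adj' (f i) (f j)) ->
  has_clique_or_indep adj n m f -> has_clique_or_indep adj' n m f.
Proof.
move=> adjE [[g [g_inj clique]] | [g [g_inj indep]]]; [left | right];
  exists g; split=> // i j ij; have gij : g i != g j by rewrite (inj_eq g_inj).
  by apply/adjE => //; apply: clique.
by move=> /(adjE _ _ gij); apply: indep.
Qed.

Section MaximalElements.

Variables (A : Type) (le : A -> A -> Prop) (r b : nat) (f : 'I_r -> A).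
Hypotheses (le_po : is_partial_order le) (f_inj : injective f).

Definition antichain (S : {set 'I_r}) : Prop :=
  {in S &, forall i j, i != j -> ~ po_adj le (f i) (f j)}.

Definition maximals (S : {set 'I_r}) : {set 'I_r} :=
  [set i in S | `[< forall j, j \in S -> le (f i) (f j) -> j = i >]].

Lemma maximals_antichain S : antichain (maximals S).
Proof.
move=> i j /setIdP[iS /asboolP i_max] /setIdP[jS /asboolP j_max] ij.
by case=> [/(i_max _ jS) | /(j_max _ iS)] eq_ij; rewrite eq_ij eqxx in ij.
Qed.

Lemma maximalsN (S : {set 'I_r}) i : i \in S -> i \notin maximals S ->
  exists2 j, j \in S & j != i /\ le (f i) (f j).
Proof.
move=> iS; rewrite inE iS => /asboolPn /existsNP [j].
by move=> /not_implyP [jS /not_implyP [lij /eqP ji]]; exists j.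
Qed.

Hypothesis antichain_le : forall S, antichain S -> (#|S| <= b)%N.

Lemma chain_with_top k (S : {set 'I_r}) : (k * b < #|S|)%N ->
  exists (C : {set 'I_r}) t, [/\ C \subset S, #|C| = k.+1, t \in C,
    {in C, forall c, le (f c) (f t)} &
    {in C &, forall c c', po_adj le (f c) (f c')}].
Proof.
case: le_po => le_refl [le_anti le_trans].
elim: k S => [|k IHk] S S_gt.
  have [i iS] : exists i, i \in S by apply/set0Pn; rewrite -card_gt0.
  exists [set i], i; split; rewrite ?finset.sub1set ?cards1 ?set11 //.
    by move=> c /set1P ->.
  by move=> c c' /set1P -> /set1P ->; left.
have MS : maximals S \subset S by apply/fintype.subsetP => i /setIdP[].
have : (k * b < #|S :\: maximals S|)%N.
  rewrite cardsDS //; have := antichain_le (@maximals_antichain S).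
  by rewrite mulSn in S_gt; lia.
move=> /IHk [C [t [CS C_card tC t_top C_chain]]].
have /setDP [tS tM] := fintype.subsetP CS t tC.
have [j jS [jt tj]] := maximalsN tS tM.
have jC : j \notin C.
  by apply: contra jt => jC; apply/eqP/f_inj/le_anti => //; apply: t_top.
have j_top : {in j |: C, forall c, le (f c) (f j)}.
  move=> c /setU1P [-> | cC]; first exact: le_refl.
  exact: le_trans (t_top c cC) tj.
exists (j |: C), j; split; rewrite ?setU11 //.
- rewrite finset.subUset finset.sub1set jS.
  by rewrite (fintype.subset_trans CS) ?subsetDl.
- by rewrite cardsU1 jC C_card.
move=> c c' /setU1P [-> | cC] /setU1P [-> | c'C]; first by left.
- by right; apply/j_top/setU1r.
- by left; apply/j_top/setU1r.
- exact: C_chain.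
Qed.

End MaximalElements.

Local Open Scope classical_set_scope.

Lemma PO_ramsey_prop_gt a b r : (a * b < r)%N -> PO_ramsey_prop a.+1 b.+1 r.
Proof.
move=> ab_r A le le_po f f_inj _.
have [[S [S_anti S_gt]] | small] :=
  pselect (exists S, antichain le f S /\ (b < #|S|)%N).
  right; exact: (large_set_injection
                  (P := fun i j => ~ po_adj le (f i) (f j)) S_gt S_anti).
have antichain_le S : antichain le f S -> (#|S| <= b)%N.
  by move=> S_anti; rewrite leqNgt; apply/negP => S_gt; apply: small; exists S.
have [|C [t [_ C_card _ _ C_chain]]] :=
  chain_with_top le_po f_inj antichain_le (k := a) (S := [set: _]%SET).
  by rewrite cardsT card_ord.
left; apply: (large_set_injection (P := fun i j => po_adj le (f i) (f j))
                                   (S := C)).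
  by rewrite C_card.
by move=> i j iC jC _; apply: C_chain.
Qed.

Lemma subset_partial_order (T : Type) :
  is_partial_order (fun X Y : set T => X `<=` Y).
Proof.
split; first by move=> X x.
split; first by move=> X Y XY YX; apply/seteqP.
by move=> X Y Z XY YZ x /XY /YZ.
Qed.

Lemma inclusion_adj_po (R : nzRingType) (I J : set R) : I <> J ->
  inclusion_adj I J <-> po_adj (fun X Y : set R => X `<=` Y) I J.
Proof.
move=> IJ; split=> [[[IJs _] | [JIs _]] | [IJs | JIs]];
  [left | right | left | right] => //.
  by split=> // JIs; apply: IJ; apply/seteqP.
by split=> // IJs; apply: IJ; apply/seteqP.
Qed.

Lemma II_ramsey_of_PO n m r : PO_ramsey_prop n m r -> II_ramsey_prop n m r.
Proof.
move=> PO R f f_inj _.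
apply: (eq_has_clique_or_indep (adj := po_adj (fun X Y : set R => X `<=` Y))).
  move=> i j ij; symmetry; apply: inclusion_adj_po.
  by move=> /f_inj eq_ij; rewrite eq_ij eqxx in ij.
exact: PO (subset_partial_order R) f f_inj (fun _ => I).
Qed.

Lemma grid_no_clique_or_indep (V : Type) (adj : V -> V -> Prop) a b r
    (f : 'I_r -> V) (g : 'I_r -> 'I_b * 'I_a) :
  injective g ->
  (forall i j, i != j -> adj (f i) (f j) <-> (g i).1 = (g j).1) ->
  ~ has_clique_or_indep adj a.+1 b.+1 f.
Proof.
move=> g_inj adjE [[h [h_inj clique]] | [h [h_inj indep]]].
  have col k : (g (h k)).1 = (g (h ord0)).1.
    have [-> // | k0] := eqVneq k ord0.
    by apply/adjE; [rewrite (inj_eq h_inj) | apply: clique].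
  have : injective (fun k => (g (h k)).2).
    move=> k k' eq_kk'; apply/h_inj/g_inj.
    rewrite [g (h k)]surjective_pairing [g (h k')]surjective_pairing.
    by rewrite (col k) (col k') eq_kk'.
  by move/leq_card; rewrite !card_ord ltnn.
have : injective (fun k => (g (h k)).1).
  move=> k k' eq_kk'; apply/eqP/negPn/negP => kk'.
  by apply: (indep _ _ kk'); apply/adjE; rewrite ?(inj_eq h_inj).
by move/leq_card; rewrite !card_ord ltnn.
Qed.

Definition dvd_ideal (d : nat) : set int := [set x | (d%:Z %| x)%Z].

Lemma dvd_ideal_nontrivial d : (1 < d)%N -> nontrivial_left_ideal (dvd_ideal d).
Proof.
move=> d_gt1; split; [split; [|split] | split].
- exact: dvdz0.
- by move=> x y dx dy; rewrite /dvd_ideal /= rpredB.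
- by move=> s x dx; apply: dvdz_mull.
- move=> d0; have : dvd_ideal d d%:Z := dvdzz _.
  by rewrite d0 /= => -[eq_d0]; rewrite eq_d0 in d_gt1.
- move=> dT; have : dvd_ideal d 1 by rewrite dT.
  by rewrite /dvd_ideal /= dvdz1 absz_nat => /eqP eq_d1; rewrite eq_d1 in d_gt1.
Qed.

Lemma dvd_ideal_subset d d' : dvd_ideal d `<=` dvd_ideal d' <-> (d' %| d)%N.
Proof.
split=> [sub | dd' x dx]; first exact: (sub _ (dvdzz d%:Z)).
exact: dvdz_trans (dd' : (d'%:Z %| d%:Z)%Z) dx.
Qed.

Lemma dvdn_prime_exp p q k l : prime p -> prime q ->
  (p ^ k.+1 %| q ^ l.+1)%N = (p == q) && (k <= l)%N.
Proof.
move=> p_pr q_pr; have [<- | pq] := eqVneq p q.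
  by rewrite dvdn_Pexp2l ?prime_gt1.
apply/negP => /(dvdn_trans (dvdn_exp (ltn0Sn k) (dvdnn p))).
by rewrite Euclid_dvdX // dvdn_prime2 // (negbTE pq).
Qed.

Definition prime_seq (k : nat) : nat :=
  iter k (fun p => s2val (prime_above p)) 2.

Lemma prime_seq_prime k : prime (prime_seq k).
Proof. by case: k => // k; rewrite /prime_seq iterS; case: prime_above. Qed.

Lemma prime_seq_inj : injective prime_seq.
Proof.
apply: incn_inj; apply: leq_mono; apply: homo_ltn => [|k].
  exact: ltn_trans.
by rewrite /prime_seq iterS; case: prime_above.
Qed.

Definition grid_ideal a b (x : 'I_b * 'I_a) : set int :=
  dvd_ideal (prime_seq x.1 ^ x.2.+1).

Lemma grid_ideal_nontrivial a b (x : 'I_b * 'I_a) :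
  nontrivial_left_ideal (grid_ideal x).
Proof.
apply: dvd_ideal_nontrivial; have p_gt1 := prime_gt1 (prime_seq_prime x.1).
by rewrite (leq_trans p_gt1) // expnS leq_pmulr // expn_gt0 ltnW.
Qed.

Lemma grid_ideal_subset a b (x y : 'I_b * 'I_a) :
  grid_ideal x `<=` grid_ideal y <-> y.1 = x.1 /\ (y.2 <= x.2)%N.
Proof.
split=> [/dvd_ideal_subset | [eq1 yx]]; last first.
  by apply/dvd_ideal_subset; rewrite eq1 dvdn_exp2l.
rewrite dvdn_prime_exp ?prime_seq_prime // (inj_eq prime_seq_inj).
by move=> /andP[/eqP/val_inj].
Qed.

Lemma grid_ideal_inj a b : injective (@grid_ideal a b).
Proof.
move=> x y eq_xy.
have /grid_ideal_subset [eq1 yx] : grid_ideal x `<=` grid_ideal y.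
  by rewrite eq_xy.
have /grid_ideal_subset [_ xy] : grid_ideal y `<=` grid_ideal x.
  by rewrite eq_xy.
clear eq_xy; move: x y eq1 yx xy => [x1 x2] [y1 y2] /= -> yx xy.
by congr pair; apply/val_inj/eqP; rewrite eqn_leq xy yx.
Qed.

Lemma inclusion_adj_grid_ideal a b (x y : 'I_b * 'I_a) : x != y ->
  inclusion_adj (grid_ideal x) (grid_ideal y) <-> x.1 = y.1.
Proof.
move=> xy; apply: (iff_trans (inclusion_adj_po _)).
  by move=> /grid_ideal_inj eq_xy; rewrite eq_xy eqxx in xy.
split=> [[/grid_ideal_subset [-> _] | /grid_ideal_subset [-> _]] // | eq1].
have [yx | xy2] := leqP y.2 x.2; [left | right]; apply/grid_ideal_subset.
  by split.
by split; [| apply: ltnW].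
Qed.

Lemma not_II_ramsey_prop_le a b r :
  (r <= a * b)%N -> ~ II_ramsey_prop a.+1 b.+1 r.
Proof.
move=> r_ab II.
have [||g [g_inj _]] :=
  @large_set_injection _ (fun _ _ : 'I_b * 'I_a => True) r [set: _]%SET => //.
  by rewrite cardsT card_prod !card_ord mulnC.
have f_inj : injective (fun i => grid_ideal (g i)).
  by move=> i j /grid_ideal_inj /g_inj.
apply: (grid_no_clique_or_indep g_inj).
  by move=> i j ij; apply: inclusion_adj_grid_ideal; rewrite (inj_eq g_inj).
exact: II int _ f_inj (fun i => grid_ideal_nontrivial (g i)).
Qed.

Theorem theorem3p12 (n m : nat) (hn : (1 <= n)%N) (hm : (1 <= m)%N) :
  R_II_is n m ((n - 1) * (m - 1) + 1) /\ R_PO_is n m ((n - 1) * (m - 1) + 1).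
Proof.
case: n hn => // a _; case: m hm => // b _; rewrite !subn1 addn1 /=.
have PO_ab := PO_ramsey_prop_gt (ltnSn (a * b)).
have least r : II_ramsey_prop a.+1 b.+1 r -> (a * b < r)%N.
  by move=> II; rewrite ltnNge; apply/negP => /not_II_ramsey_prop_le; apply.
split; split.
- exact: II_ramsey_of_PO.
- exact: least.
- exact: PO_ab.
- by move=> r /II_ramsey_of_PO /least.
Qed.
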